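(* Let $\mathcal{H}$ be a real Hilbert space, $A:\mathcal{H}\rightrightarrows\mathcal{H}$ maximal monotone, $p\geq2$ an integer, and define $\varphi:[0,+\infty)\times\mathcal{H}\to[0,+\infty)$ by $\varphi(\lambda,x)=\lambda^{1/(p-1)}\|x-(I+\lambda A)^{-1}x\|$ for $\lambda>0$ and $\varphi(0,x)=0$. Fix $x\in\mathcal{H}$ with $0\notin Ax$. Then $\lambda\mapsto\varphi(\lambda,x)$ is continuous and strictly increasing on $[0,+\infty)$, $\varphi(0,x)=0$, and $\varphi(\lambda,x)\to+\infty$ as $\lambda\to+\infty$.
   Context: $(I+\lambda A)^{-1}$ is the resolvent of $A$ of index $\lambda>0$. *)

From HB Require Import structures.
From mathcomp Require Import all_boot all_order all_algebra.
From mathcomp Require Import all_classical all_reals all_analysis.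
Set Implicit Arguments. Unset Strict Implicit. Unset Printing Implicit Defensive.
Import Order.TTheory GRing.Theory Num.Theory.
Import numFieldNormedType.Exports.
Local Open Scope classical_set_scope.
Local Open Scope ring_scope.

(* A real Hilbert space is a complete normed space V whose norm comes from an
   inner product [inner]: symmetric, linear in the first argument, and
   |x|^2 = <x,x>. *)
Definition is_inner_product (R : realType) (V : normedModType R)
    (inner : V -> V -> R) : Prop :=
  [/\ forall x y, inner x y = inner y x,
      forall a x y z, inner (a *: x + y) z = a * inner x z + inner y z
    & forall x, `|x| ^+ 2 = inner x x].

Definition monotone_op (R : realType) (V : normedModType R)
    (inner : V -> V -> R) (A : V -> set V) : Prop :=
  forall x y u v, A x u -> A y v -> 0 <= inner (x - y) (u - v).

Definition maximal_monotone (R : realType) (V : normedModType R)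
    (inner : V -> V -> R) (A : V -> set V) : Prop :=
  monotone_op inner A /\
  forall B : V -> set V, monotone_op inner B ->
    (forall x u, A x u -> B x u) -> forall x u, B x u -> A x u.

(* Resolvent (I + lam A)^{-1} x: the (for maximal monotone A and lam > 0,
   unique and existing by Minty's theorem) y with x ∈ y + lam A y,
   i.e. lam^-1 (x - y) ∈ A y. *)
Definition resolvent (R : realType) (V : normedModType R)
    (A : V -> set V) (lam : R) (x : V) : V :=
  xget x [set y | A y (lam^-1 *: (x - y))].

Definition phi (R : realType) (V : normedModType R)
    (A : V -> set V) (p : nat) (lam : R) (x : V) : R :=
  if 0 < lam then powR lam ((p.-1)%:R^-1) * `|x - resolvent A lam x| else 0.

From HB Require Import structures.
From mathcomp Require Import all_boot all_order all_algebra.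
From mathcomp Require Import all_classical all_reals all_analysis.
From mathcomp Require Import ring lra.
Set Implicit Arguments. Unset Strict Implicit. Unset Printing Implicit Defensive.
Import Order.TTheory GRing.Theory Num.Theory.
Import numFieldNormedType.Exports.
Local Open Scope classical_set_scope.
Local Open Scope ring_scope.

(* Minty's theorem provides the resolvent.  For a monotone relation P, let C
   be the convex hull of the lifted graph {(a, w, <a, w>) | P a w} in
   V x V x R.  Monotonicity makes the coupling t + t' - <a, w'> - <a', w>
   nonnegative on C, hence psi (a, w, t) = - |w - a|^2 / 4 - t <= 0 on C.
   As psi is strongly concave in the gap w - a, the gaps of a maximizing
   sequence are Cauchy; if d is their limit, y = - d / 2 satisfies
   <a - y, w + y> >= 0 on the graph of P.  Applied to a shifted and scaled
   copy of a maximal monotone A, this solves x - y in lam A y.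
   For the residuals r l = x - J_l x, monotonicity of A at the points
   (J_l x, r l / l) gives <r m - r l, m r l - l r m> >= 0, whence, by
   Cauchy-Schwarz, |r l| is nondecreasing and l |r m - r l| <= |m - l| |r l|.
   Since r l <> 0 when 0 is not in A x, phi l = l^(1/(p-1)) |r l| is strictly
   increasing, continuous, and at least l^(1/(p-1)) |r 1| for l >= 1. *)

Section InnerProduct.
Context {R : realType} {V : normedModType R} {inner : V -> V -> R}.
Hypothesis inner_prod : is_inner_product inner.

Lemma innerC x y : inner x y = inner y x.
Proof. by case: inner_prod. Qed.

Lemma sqr_normE x : `|x| ^+ 2 = inner x x.
Proof. by case: inner_prod. Qed.

Lemma innerZDl a x y z : inner (a *: x + y) z = a * inner x z + inner y z.
Proof. by case: inner_prod. Qed.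

Lemma inner0l z : inner 0 z = 0.
Proof. by have := innerZDl 1 0 0 z; rewrite scaler0 addr0 mul1r; lra. Qed.

Lemma innerDl x y z : inner (x + y) z = inner x z + inner y z.
Proof. by rewrite -[x in LHS]scale1r innerZDl mul1r. Qed.

Lemma innerZl a x z : inner (a *: x) z = a * inner x z.
Proof. by rewrite -[_ *: x]addr0 innerZDl inner0l addr0. Qed.

Lemma innerNl x z : inner (- x) z = - inner x z.
Proof. by rewrite -scaleN1r innerZl mulN1r. Qed.

Lemma innerBl x y z : inner (x - y) z = inner x z - inner y z.
Proof. by rewrite innerDl innerNl. Qed.

Lemma inner0r z : inner z 0 = 0.
Proof. by rewrite innerC inner0l. Qed.

Lemma innerDr x y z : inner z (x + y) = inner z x + inner z y.
Proof. by rewrite innerC innerDl !(innerC _ z). Qed.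

Lemma innerZr a x z : inner z (a *: x) = a * inner z x.
Proof. by rewrite innerC innerZl innerC. Qed.

Lemma innerNr x z : inner z (- x) = - inner z x.
Proof. by rewrite innerC innerNl innerC. Qed.

Lemma innerBr x y z : inner z (x - y) = inner z x - inner z y.
Proof. by rewrite innerDr innerNr. Qed.

Definition innerE := (innerDl, innerDr, innerBl, innerBr, innerNl, innerNr,
  innerZl, innerZr, inner0l, inner0r).

Lemma inner_self_ge0 x : 0 <= inner x x.
Proof. by rewrite -sqr_normE sqr_ge0. Qed.

Lemma cauchy_schwarz x y : inner x y <= `|x| * `|y|.
Proof.
have [->|x0] := eqVneq x 0; first by rewrite inner0l normr0 mul0r.
have [->|y0] := eqVneq y 0; first by rewrite inner0r normr0 mulr0.
have a0 : 0 < `|x| by rewrite normr_gt0.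
have b0 : 0 < `|y| by rewrite normr_gt0.
have := inner_self_ge0 (`|y| *: x - `|x| *: y).
rewrite !innerE -!sqr_normE (innerC y x) => h.
have : 0 <= `|x| * `|y| * (`|x| * `|y| - inner x y) by nra.
by rewrite pmulr_rge0 ?mulr_gt0 // subr_ge0.
Qed.

End InnerProduct.

Section MonotoneRelatedAntidiagonal.
Context {R : realType} {V : completeNormedModType R} {inner : V -> V -> R}.
Hypothesis inner_prod : is_inner_product inner.
Context {P : V -> set V}.
Hypothesis P_mono : monotone_op inner P.
Hypothesis P_nonempty : exists a w, P a w.

Local Notation E := (V * V * R)%type.

Let mix (s : R) (e1 e2 : E) : E :=
  ((1 - s) *: e1.1.1 + s *: e2.1.1, (1 - s) *: e1.1.2 + s *: e2.1.2,
   (1 - s) * e1.2 + s * e2.2).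

Let convex (S : E -> Prop) :=
  forall e1 e2 s, S e1 -> S e2 -> 0 <= s <= 1 -> S (mix s e1 e2).

Let lift a w : E := (a, w, inner a w).

Let hull (e : E) :=
  forall S, convex S -> (forall a w, P a w -> S (lift a w)) -> S e.

Let coupling (e1 e2 : E) :=
  e1.2 + e2.2 - inner e1.1.1 e2.1.2 - inner e2.1.1 e1.1.2.

Let gap (e : E) := e.1.2 - e.1.1.

Let psi (e : E) := - inner (gap e) (gap e) / 4 - e.2.

Let hull_convex : convex hull.
Proof.
by move=> e1 e2 s h1 h2 s01 S cS liftS; apply: (cS _ _ _ _ _ s01); [apply: h1|apply: h2].
Qed.

Let hull_lift a w : P a w -> hull (lift a w).
Proof. by move=> Paw S _; apply. Qed.

Let couplingC e1 e2 : coupling e1 e2 = coupling e2 e1.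
Proof. by rewrite /coupling; ring. Qed.

Let coupling_lift a w b v :
  coupling (lift a w) (lift b v) = inner (a - b) (w - v).
Proof. by rewrite /coupling /= !(innerE inner_prod) (innerC inner_prod b w); ring. Qed.

Let convex_coupling_ge0 e : convex (fun e' => 0 <= coupling e' e).
Proof.
move=> e1 e2 s h1 h2 /andP[s0 s1].
have -> : coupling (mix s e1 e2) e = (1 - s) * coupling e1 e + s * coupling e2 e.
  by rewrite /coupling /= !(innerE inner_prod); ring.
by rewrite addr_ge0 // mulr_ge0 // subr_ge0.
Qed.

Let hull_coupling_ge0 e1 e2 : hull e1 -> hull e2 -> 0 <= coupling e1 e2.
Proof.
move=> h1 h2; rewrite couplingC.
apply: h2 (@convex_coupling_ge0 e1) _ => b v Pbv; rewrite couplingC.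
apply: h1 (@convex_coupling_ge0 (lift b v)) _ => a w Paw.
by rewrite coupling_lift; apply: P_mono.
Qed.

Let psi_le0 e : hull e -> psi e <= 0.
Proof.
move=> he; have := hull_coupling_ge0 he he.
have := inner_self_ge0 inner_prod (e.1.1 + e.1.2).
rewrite /coupling /psi /gap !(innerE inner_prod) (innerC inner_prod e.1.2); lra.
Qed.

Let psi_mix s e1 e2 : psi (mix s e1 e2) = (1 - s) * psi e1 + s * psi e2
  + s * (1 - s) * inner (gap e1 - gap e2) (gap e1 - gap e2) / 4.
Proof.
rewrite /psi; have -> : gap (mix s e1 e2) = (1 - s) *: gap e1 + s *: gap e2.
  by rewrite /gap /= !scalerBr opprD addrACA.
move: (gap e1) (gap e2) => u v.
by rewrite !(innerE inner_prod) (innerC inner_prod v u) /=; ring.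
Qed.

Let M := sup [set psi e | e in hull].

Let has_sup_psi : has_sup [set psi e | e in hull].
Proof.
split; last by exists 0 => _ [e he <-]; apply: psi_le0.
have [a [w Paw]] := P_nonempty.
by exists (psi (lift a w)), (lift a w) => //; apply: hull_lift.
Qed.

Let psi_le_sup e : hull e -> psi e <= M.
Proof. by move=> he; apply: sup_upper_bound has_sup_psi _ _; exists e. Qed.

Let sup_le0 : M <= 0.
Proof. by apply: ge_sup; [case: has_sup_psi|move=> _ [e he <-]; apply: psi_le0]. Qed.

Let exists_near_sup n : exists e, hull e /\ M - harmonic n < psi e.
Proof. by have [_ [e he <-] ?] := sup_adherent (harmonic_gt0 n) has_sup_psi; exists e. Qed.

Let en n : E := xget (0, 0, 0) [set e | hull e /\ M - harmonic n < psi e].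

Let en_near_sup n : hull (en n) /\ M - harmonic n < psi (en n).
Proof. exact: xgetPex (exists_near_sup n). Qed.

Let d n := gap (en n).

Let dist_gap_lt m n : inner (d m - d n) (d m - d n) < 8 * (harmonic m + harmonic n).
Proof.
have [hm Mm] := en_near_sup m; have [hn Mn] := en_near_sup n.
have half01 : 0 <= (2^-1 : R) <= 1 by rewrite invr_ge0 ler0n invf_le1 ?ler1n.
have := psi_le_sup (hull_convex hm hn half01).
by rewrite psi_mix /d; lra.
Qed.

Let gap_cvg : cvg (d @ \oo).
Proof.
apply: cauchy_cvg; apply: cauchy_exP => e e0.
have e2 : 0 < e ^+ 2 / 16 by rewrite divr_gt0 // exprn_gt0.
have [N _ hN] := cvgr_dist_lt _ _ (@cvg_harmonic R) _ e2.
exists (d N), N => // n /= Nn; rewrite -ball_normE /ball_ /=.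
have := dist_gap_lt N n; rewrite -(sqr_normE inner_prod).
have := hN N (leqnn N); have := hN n Nn.
rewrite !sub0r !normrN !ger0_norm ?harmonic_ge0 // => small_n small_N dist_lt.
by have := normr_ge0 (d N - d n); nra.
Qed.

Let dlim := lim (d @ \oo).

Let psi_add_dist_le e s : hull e -> 0 < s <= 1 ->
  psi e + (1 - s) * (`|dlim - gap e| ^+ 2 / 4) <= 0.
Proof.
move=> he /andP[s0 s1].
have f_cvg : psi e + (1 - s) * (`|d n - gap e| ^+ 2 / 4) @[n --> \oo] -->
             psi e + (1 - s) * (`|dlim - gap e| ^+ 2 / 4).
  apply: cvgD; first exact: cvg_cst.
  apply: cvgM; first exact: cvg_cst.
  apply: cvgM; last exact: cvg_cst.
  rewrite expr2; under eq_cvg do rewrite expr2.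
  by apply: cvgM; apply: cvg_norm; apply: cvgB => //; exact: cvg_cst.
have h_cvg : harmonic n / s @[n --> \oo] --> (0 : R).
  by rewrite -(mul0r s^-1); apply: cvgM; [exact: cvg_harmonic|exact: cvg_cst].
apply: (ler_cvg_to f_cvg h_cvg); apply: nearW => n.
have [hn Mn] := en_near_sup n.
have := psi_le_sup (hull_convex hn he (introT andP (conj (ltW s0) s1))).
rewrite psi_mix -(sqr_normE inner_prod) -/(d n) ler_pdivlMr // => h.
have h1 : (1 - s) * (M - harmonic n) <= (1 - s) * psi (en n).
  by rewrite ler_wpM2l ?subr_ge0 // ltW.
have h2 : s * M <= 0 by rewrite pmulr_rle0.
have h3 : 0 <= s * harmonic n by rewrite mulr_ge0 ?ltW ?harmonic_gt0.
nra.
Qed.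

Let psi_add_dist_le0 e : hull e -> psi e + `|dlim - gap e| ^+ 2 / 4 <= 0.
Proof.
move=> he; set q := `|_| ^+ 2 / 4.
have q0 : 0 <= q by rewrite divr_ge0 ?sqr_ge0.
apply/ler_addgt0Pr => eps eps0; rewrite add0r.
have qe : 0 < q + eps by rewrite ltr_wpDl.
set s := eps / (q + eps).
have s01 : 0 < s <= 1 by rewrite divr_gt0 // ler_pdivrMr // mul1r lerDr.
have sq : s * q <= eps by rewrite mulrAC ler_pdivrMr //; nra.
by have := psi_add_dist_le he s01; rewrite -/q; nra.
Qed.

Lemma monotone_related_antidiagonal :
  exists y, forall a w, P a w -> 0 <= inner (a - y) (w + y).
Proof.
exists (- (2^-1) *: dlim) => a w Paw.
have := psi_add_dist_le0 (hull_lift Paw).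
rewrite (sqr_normE inner_prod) /psi /gap /= !(innerE inner_prod).
rewrite (innerC inner_prod a dlim) (innerC inner_prod w dlim) (innerC inner_prod w a).
lra.
Qed.

End MonotoneRelatedAntidiagonal.

Section MaximalMonotone.
Context {R : realType} {V : normedModType R} {inner : V -> V -> R}.
Hypothesis inner_prod : is_inner_product inner.
Context {A : V -> set V}.
Hypothesis A_max : maximal_monotone inner A.

Lemma maximal_monotone_related y v :
  (forall z u, A z u -> 0 <= inner (z - y) (u - v)) -> A y v.
Proof.
move=> yv_related; pose B z u := A z u \/ (z = y /\ u = v).
have B_mono : monotone_op inner B.
  move=> z1 z2 u1 u2 [h1|[-> ->]] [h2|[-> ->]].
  - exact: A_max.1 h1 h2.
  - exact: yv_related.
  - by rewrite -opprB -(opprB u2) (innerNl inner_prod) (innerNr inner_prod) opprK yv_related.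
  - by rewrite subrr (inner0l inner_prod).
by apply: A_max.2 B_mono _ _ _ (or_intror (conj erefl erefl)) => z u; left.
Qed.

Lemma maximal_monotone_nonempty : exists y v, A y v.
Proof.
apply/not_existsP => A_empty; apply: (A_empty 0); exists 0.
by apply: maximal_monotone_related => z u Azu; case: (A_empty z); exists u.
Qed.

End MaximalMonotone.

Lemma powR_cvgy (R : realType) (k : R) : 0 < k -> a `^ k @[a --> +oo] --> +oo.
Proof.
move=> k0; apply/cvgryPge => M; set t := Num.max 1 M.
have t0 : 0 <= t by rewrite le_max ler01.
have tE : (t `^ k^-1) `^ k = t by rewrite -powRrM mulVf ?gt_eqF // powRr1.
near=> a; have ta : t `^ k^-1 <= a by near: a; apply: nbhs_pinfty_ge; rewrite num_real.
apply: (le_trans (_ : M <= t)); first by rewrite le_max lexx orbT.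
rewrite -{1}tE; apply: ge0_ler_powR => //; first exact: ltW.
  by rewrite nnegrE powR_ge0.
by rewrite nnegrE (le_trans _ ta) ?powR_ge0.
Unshelve. all: by end_near. Qed.

Section Resolvent.
Context {R : realType} {V : completeNormedModType R} {inner : V -> V -> R}.
Hypothesis inner_prod : is_inner_product inner.
Variable A : V -> set V.
Hypothesis A_max : maximal_monotone inner A.
Variable x : V.

Lemma resolvent_exists lam : 0 < lam -> exists y, A y (lam^-1 *: (x - y)).
Proof.
move=> lam0; pose P a w := A (a + x) (lam^-1 *: w).
have P_mono : monotone_op inner P.
  move=> a b w v Paw Pbv; have := A_max.1 _ _ _ _ Paw Pbv.
  rewrite opprD addrACA subrr addr0 -scalerBr (innerZr inner_prod).
  by rewrite pmulr_rge0 // invr_gt0.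
have P_nonempty : exists a w, P a w.
  have [y [v Ayv]] := maximal_monotone_nonempty inner_prod A_max.
  by exists (y - x), (lam *: v); rewrite /P subrK scalerA mulVf ?gt_eqF // scale1r.
have [y yP] := monotone_related_antidiagonal inner_prod P_mono P_nonempty.
exists (x + y); apply: (maximal_monotone_related inner_prod A_max) => z u Azu.
have /yP : P (z - x) (lam *: u) by rewrite /P subrK scalerA mulVf ?gt_eqF // scale1r.
have -> : lam *: u + y = lam *: (u + lam^-1 *: y).
  by rewrite scalerDr scalerA mulfV ?gt_eqF // scale1r.
have -> : x - (x + y) = - y by rewrite opprD addrA subrr add0r.
by rewrite (innerZr inner_prod) pmulr_rge0 // opprD addrA scalerN opprK.
Qed.

Lemma resolventP lam : 0 < lam ->
  A (resolvent A lam x) (lam^-1 *: (x - resolvent A lam x)).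
Proof.
move=> lam0.
exact: (xgetPex x (P := [set y | A y (lam^-1 *: (x - y))]) (resolvent_exists lam0)).
Qed.

Let r lam := x - resolvent A lam x.

Lemma residual_monotone l m : 0 < l -> 0 < m ->
  0 <= inner (r m - r l) (m *: r l - l *: r m).
Proof.
move=> l0 m0.
have := A_max.1 _ _ _ _ (resolventP l0) (resolventP m0).
rewrite -/(r l) -/(r m).
have -> : resolvent A l x - resolvent A m x = r m - r l.
  by apply/esym; rewrite /r opprB addrC addrA subrK.
move: (r l) (r m) => a b mono.
have -> : m *: a - l *: b = (l * m) *: (l^-1 *: a - m^-1 *: b).
  rewrite scalerBr !scalerA mulrAC mulfV ?gt_eqF // -mulrA mulfV ?gt_eqF //.
  by rewrite mul1r mulr1.
by rewrite (innerZr inner_prod) pmulr_rge0 ?mulr_gt0.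
Qed.

Lemma norm_residual_le l m : 0 < l -> l <= m -> `|r l| <= `|r m|.
Proof.
move=> l0 lm; have m0 : 0 < m := lt_le_trans l0 lm.
have := residual_monotone l0 m0; have := cauchy_schwarz inner_prod (r l) (r m).
move: (r l) (r m) => a b.
rewrite !(innerE inner_prod) (innerC inner_prod b a) -!(sqr_normE inner_prod) => cs mono.
have key : 0 <= (`|b| - `|a|) * (m * `|a| - l * `|b|) by nra.
rewrite leNgt; apply/negP => ba.
have := normr_ge0 b => b_ge0.
have : 0 < m * `|a| - l * `|b| by nra.
nra.
Qed.

Lemma dist_residual_le l m : 0 < l -> 0 < m ->
  l * `|r m - r l| <= `|m - l| * `|r l|.
Proof.
move=> l0 m0; have := residual_monotone l0 m0; move: (r l) (r m) => a b.
have -> : m *: a - l *: b = (m - l) *: a - l *: (b - a).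
  by rewrite scalerBl scalerBr opprB addrA subrK.
set d := b - a.
rewrite (innerBr inner_prod) !(innerZr inner_prod) -(sqr_normE inner_prod) => mono.
have := cauchy_schwarz inner_prod ((m - l) *: d) a.
rewrite (innerZl inner_prod) normrZ => cs.
have [->|d_neq0] := eqVneq d 0; first by rewrite normr0 mulr0 mulr_ge0.
have d_gt0 : 0 < `|d| by rewrite normr_gt0.
by rewrite -(ler_pM2r d_gt0) -mulrA -expr2; lra.
Qed.

Lemma residual_continuous (l : R) : 0 < l -> r y @[y --> l] --> r l.
Proof.
move=> l0; apply/cvgrPdist_le => e e0.
have rl1 : 0 < `|r l| + 1 by rewrite ltr_wpDl.
have el : 0 < e * l / (`|r l| + 1) by rewrite divr_gt0 ?mulr_gt0.
near=> y.
have y0 : 0 < y by near: y; apply: lt_nbhsr.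
have ly : `|y - l| <= e * l / (`|r l| + 1).
  by rewrite distrC; near: y; apply: cvgr_dist_le.
rewrite distrC -(ler_pM2l l0); apply: le_trans (dist_residual_le l0 y0) _.
rewrite ler_pdivlMr // in ly.
by have := normr_ge0 (y - l); nra.
Unshelve. all: by end_near. Qed.

Variable p : nat.
Hypothesis p_ge2 : (2 <= p)%N.

Let k : R := (p.-1)%:R^-1.

Let k_gt0 : 0 < k.
Proof. by rewrite invr_gt0 ltr0n; case: p p_ge2 => [|[|]]. Qed.

Let phi_gt0E l : 0 < l -> phi A p l x = l `^ k * `|r l|.
Proof. by move=> l0; rewrite /phi l0. Qed.

Lemma phi_continuous : {within `[0, +oo[, continuous (fun lam => phi A p lam x)}.
Proof.
apply/continuous_within_itvcyP; split.
  move=> l; rewrite in_itv /= andbT => l0.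
  have powR_cont : y `^ k @[y --> l] --> l `^ k.
    have : derivable (fun y : R => y `^ k) l 1 by apply: derivable_powR; rewrite in_itv /= l0.
    by move=> /derivable1_diffP /differentiable_continuous.
  have : y `^ k * `|r y| @[y --> l] --> l `^ k * `|r l|.
    by apply: cvgM => //; apply: cvg_norm; apply: residual_continuous.
  rewrite /continuous_at phi_gt0E //; apply: cvg_trans; apply: near_eq_cvg.
  by near=> y; rewrite phi_gt0E //; near: y; exact: lt_nbhsr.
rewrite {2}/phi ltxx.
apply: (@squeeze_cvgr _ _ _ _ (cst 0) (fun y => y `^ k * `|r 1|)).
- near=> y.
  have y0 : 0 < y by near: y; apply: nbhs_right_gt.
  have y1 : y <= 1 by near: y; apply: nbhs_right_le; exact: ltr01.
  rewrite phi_gt0E // mulr_ge0 ?powR_ge0 //=.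
  by rewrite ler_wpM2l ?powR_ge0 // norm_residual_le.
- exact: cvg_cst.
- rewrite -[X in _ --> X](mul0r `|r 1|).
  by apply: cvgM; [exact: powR_cvg0|exact: cvg_cst].
Unshelve. all: by end_near. Qed.

Hypothesis x_notin0 : ~ A x 0.

Let norm_residual_gt0 l : 0 < l -> 0 < `|r l|.
Proof.
move=> l0; rewrite normr_gt0; apply/eqP => r0; apply: x_notin0.
have := resolventP l0; rewrite -/(r l) r0 scaler0.
by move/eqP: r0; rewrite subr_eq0 => /eqP <-.
Qed.

Lemma phi_lt a b : 0 <= a -> a < b -> phi A p a x < phi A p b x.
Proof.
move=> a0 ab; have b0 : 0 < b := le_lt_trans a0 ab.
rewrite (phi_gt0E b0); have [->|a_neq0] := eqVneq a 0.
  by rewrite /phi ltxx mulr_gt0 ?powR_gt0 ?norm_residual_gt0.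
have {a0 a_neq0} a0 : 0 < a by rewrite lt_neqAle eq_sym a_neq0.
rewrite (phi_gt0E a0) (@lt_le_trans _ _ (b `^ k * `|r a|)) //.
  by rewrite ltr_pM2r ?norm_residual_gt0 // gt0_ltr_powR // nnegrE ltW.
by rewrite ler_pM2l ?powR_gt0 // norm_residual_le // ltW.
Qed.

Lemma phi_cvgy : phi A p lam x @[lam --> +oo] --> +oo.
Proof.
apply: (@ger_cvgy _ _ _ _ (fun lam => lam `^ k * `|r 1|)).
  near=> lam; have lam1 : 1 <= lam by near: lam; apply: nbhs_pinfty_ge.
  rewrite phi_gt0E ?(lt_le_trans ltr01) //.
  by rewrite ler_wpM2l ?powR_ge0 // norm_residual_le.
exact: (gt0_cvgMly (norm_residual_gt0 ltr01) (powR_cvgy k_gt0)).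
Unshelve. all: by end_near. Qed.

End Resolvent.

Theorem proposition2p1 (R : realType) (V : completeNormedModType R)
    (inner : V -> V -> R) (A : V -> set V) (p : nat) (x : V) :
  is_inner_product inner ->
  maximal_monotone inner A ->
  (2 <= p)%N ->
  ~ A x 0 ->
  [/\ {within `[0, +oo[, continuous (fun lam : R => phi A p lam x)},
      (forall a b : R, 0 <= a -> a < b -> phi A p a x < phi A p b x),
      phi A p 0 x = 0
    & phi A p lam x @[lam --> +oo] --> +oo].
Proof.
move=> inner_prod A_max p_ge2 x_notin0; split.
- exact: (phi_continuous inner_prod A_max (x := x) p_ge2).
- exact: (phi_lt inner_prod A_max p_ge2 x_notin0).
- by rewrite /phi ltxx.
- exact: (phi_cvgy inner_prod A_max p_ge2 x_notin0).
Qed.
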